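(* Let $B$ be a finite Blaschke product of degree $n\ge1$ and $\lambda\in\mathbb T$. Then the equation $zB(z)=\lambda$ has exactly $n+1$ distinct solutions $z_0,\dots,z_n$, all lying on $\mathbb T$, and \[ \sum_{j=0}^n\frac{1}{|B'(z_j)|+1}=1 . \]
   Context: A finite Blaschke product of degree $n$ is $B(z)=\alpha\prod_{k=1}^n \frac{z-a_k}{1-\overline{a_k}z}$ with $a_k\in\mathbb D=\{|z|<1\}$, $\alpha\in\mathbb T=\{|z|=1\}$. *)

(* complex numbers C := R[i] = complex R for R : realType
   (mathcomp-real-closed), derivative = MathComp-Analysis derive1 over the
   numFieldType C, i.e. the complex derivative lim_{h->0} (f(z+h)-f(z))/h. *)
From HB Require Import structures.
From mathcomp Require Import all_boot all_order all_algebra.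
From mathcomp Require Import all_classical all_reals all_analysis.
From mathcomp Require Export complex.
Set Implicit Arguments. Unset Strict Implicit. Unset Printing Implicit Defensive.
Import Order.TTheory GRing.Theory Num.Theory.
Import numFieldNormedType.Exports.
Local Open Scope ring_scope.
Local Open Scope complex_scope.

Definition blaschke (R : realType) (n : nat) (alpha : R[i]) (a : 'I_n -> R[i])
  (z : R[i]) : R[i] :=
  alpha * \prod_(k < n) ((z - a k) / (1 - (a k)^* * z)).

From HB Require Import structures.
From mathcomp Require Import all_boot all_order all_algebra.
From mathcomp Require Import all_classical all_reals all_analysis.
From mathcomp Require Import complex.
From mathcomp Require Import ring zify.
Set Implicit Arguments. Unset Strict Implicit. Unset Printing Implicit Defensive.
Import Order.TTheory GRing.Theory Num.Theory.
Import numFieldNormedType.Exports.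
Local Open Scope ring_scope.
Local Open Scope complex_scope.

(* Let f(z) = z B(z).  Writing B = alpha A / Q with A(z) = prod_k (z - a_k) and
   Q(z) = prod_k (1 - conj(a_k) z), the solutions of f(z) = lambda are exactly the roots
   of the polynomial P = alpha X A - lambda Q of degree n+1 (Q does not vanish there).
   1. A Blaschke factor has modulus <= 1 on the closed disc and >= 1 outside it, so
      |f(z)| = 1 forces |z| = 1: every solution lies on the unit circle.
   2. On the circle the logarithmic derivative of B gives z B'(z) = B(z) T(z), where
      T(z) = sum_k (1 - |a_k|^2) / |z - a_k|^2 >= 0 is a sum of Poisson kernels; hence
      |B'(z)| = T(z) and f'(z) = B(z) (1 + T(z)).
   3. Over C we factor P = alpha prod_j (X - z_j).  By the quotient rule f' = P'/Q at every
      root, and P'(z_j) = alpha prod_{i <> j} (z_j - z_i); since f'(z_j) <> 0 by 2, the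
      roots z_j are pairwise distinct.
   4. Lagrange interpolation of Q (of degree <= n) at the n+1 nodes z_j, evaluated at 0
      where Q(0) = 1 and alpha prod_i (- z_i) = P(0) = - lambda, is exactly the identity
      sum_j 1 / (1 + T(z_j)) = 1.
   The file first proves general facts on polynomials (size of products, Lagrange
   interpolation, derivative of a split polynomial at a root) and on complex derivatives
   (polynomials, inverses, products, Moebius maps, quotients), then facts on a single
   Blaschke factor, on the Blaschke product on the circle, and on the polynomial P;
   the theorem follows at the end. *)

Lemma size_prod_leq (K : idomainType) (I : finType) (P : pred I)
    (F : I -> {poly K}) (d : nat) :
  (forall i, P i -> (size (F i) <= d.+1)%N) ->
  (size (\prod_(i | P i) F i)%R <= (#|P| * d).+1)%N.
Proof.
move=> sizeF; have -> : #|P| = count P (index_enum I) by rewrite -size_filter cardE.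
elim: (index_enum I) => [|i r IH]; first by rewrite big_nil size_poly1.
rewrite big_cons /=; case: ifP => Pi //=.
apply: leq_trans (size_mul_leq _ _) _.
have := sizeF i Pi; move: IH; rewrite mulSn.
by move: (count P r * d)%N (size _) (size _) => c s t; lia.
Qed.

Lemma lagrange_interpolation (K : fieldType) (m : nat) (z : 'I_m -> K)
    (q : {poly K}) (x : K) :
  injective z -> (size q <= m)%N ->
  q.[x] = \sum_(j < m) q.[z j] / \prod_(i < m | i != j) (z j - z i) *
                      \prod_(i < m | i != j) (x - z i).
Proof.
move=> z_inj size_q.
pose node j := \prod_(i < m | i != j) ('X - (z i)%:P) : {poly K}.
have node_at y j : (node j).[y] = \prod_(i < m | i != j) (y - z i).
  by rewrite horner_prod; apply: eq_bigr => i _; rewrite hornerXsubC.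
pose L := \sum_(j < m) (q.[z j] / \prod_(i < m | i != j) (z j - z i)) *: node j.
have L_at y : L.[y] = \sum_(j < m) q.[z j] / \prod_(i < m | i != j) (z j - z i) *
                      \prod_(i < m | i != j) (y - z i).
  by rewrite horner_sum; apply: eq_bigr => j _; rewrite hornerZ node_at.
suff qL : q = L by rewrite -L_at {1}qL.
apply/eqP; rewrite -subr_eq0; apply/eqP.
apply: (@roots_geq_poly_eq0 _ _ (map z (enum 'I_m))).
- apply/allP => _ /mapP [k _ ->]; rewrite /root hornerD hornerN L_at.
  rewrite [\sum_(j < m) _](bigD1 k) //= [\sum_(j < m | j != k) _]big1 => [|j jk].
    rewrite addr0 divfK ?subrr //; apply/prodf_neq0 => i ik.
    by rewrite subr_eq0 (inj_eq z_inj) eq_sym.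
  rewrite [X in _ * X](bigD1 k) /=; last by rewrite eq_sym.
  by rewrite subrr mul0r mulr0.
- by rewrite (map_inj_uniq z_inj) enum_uniq.
rewrite size_map size_enum_ord; apply: leq_trans (size_add _ _) _.
rewrite size_opp geq_max size_q /=; apply: (leq_trans (size_sum _ _ _)).
apply/bigmax_leqP => j _; apply: leq_trans (size_scale_leq _ _) _.
have := @size_prod_leq K _ (fun i => i != j) (fun i => 'X - (z i)%:P) 1
  (fun i _ => eq_leq (size_XsubC _)).
rewrite muln1 cardC1 card_ord prednK //; exact: leq_ltn_trans (ltn_ord j).
Qed.

Lemma deriv_prod_XsubC_at (K : comNzRingType) (m : nat) (z : 'I_m -> K) (j : 'I_m) :
  (\prod_(i < m) ('X - (z i)%:P))^`().[z j] = \prod_(i < m | i != j) (z j - z i).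
Proof.
rewrite (bigD1 j) //= derivM derivXsubC mul1r hornerD hornerM hornerXsubC.
rewrite subrr mul0r addr0 horner_prod.
by apply: eq_bigr => i _; rewrite hornerXsubC.
Qed.

Section Derivatives.
Variable K : numFieldType.

Lemma is_derive_horner (p : {poly K}) (x : K^o) :
  is_derive x 1 (fun y : K^o => p.[y] : K^o) p^`().[x].
Proof.
elim/poly_ind: p => [|p c IH].
  rewrite deriv0 horner0.
  have -> : (fun y : K^o => (0 : {poly K}).[y] : K^o) = cst 0.
    by apply/funext => y; rewrite horner0.
  exact: is_derive_cst.
have -> : (fun y : K^o => (p * 'X + c%:P).[y] : K^o) =
    (fun y : K^o => p.[y] : K^o) * id + cst c.
  by apply/funext => y; rewrite !hornerE.
apply: is_derive_eq.
by rewrite derivMXaddC !hornerE -[_%:A]/(_ * 1) -[x *: _]/(x * _) mulr1 [x * _]mulrC.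
Qed.

Lemma is_deriveV_nz (f : K^o -> K^o) (x : K^o) (df : K) :
  f x != 0 -> is_derive x 1 f df ->
  is_derive x 1 (fun y => (f y)^-1) (- (f x)^-2 *: df).
Proof.
move=> fx0 [d dv]; apply: DeriveDef; first exact: derivableV.
by rewrite deriveV // dv.
Qed.

Lemma is_derive_prod_log (I : Type) (r : seq I) (F : I -> K^o -> K^o)
    (dF : I -> K) (x : K^o) :
  (forall i, is_derive x 1 (F i) (dF i)) -> (forall i, F i x != 0) ->
  is_derive x 1 (fun y => \prod_(i <- r) F i y)
    ((\prod_(i <- r) F i x) * \sum_(i <- r) dF i / F i x).
Proof.
move=> dFi Fi0; elim: r => [|i r IH].
  have -> : (fun y => \prod_(i <- [::]) F i y) = cst 1.
    by apply/funext => y; rewrite big_nil.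
  by rewrite !big_nil mul1r; exact: is_derive_cst.
have -> : (fun y => \prod_(j <- i :: r) F j y) =
    F i * (fun y => \prod_(j <- r) F j y).
  by apply/funext => y; rewrite big_cons.
apply: is_derive_eq; rewrite !big_cons /= -[_ *: _]/(_ * _) -[_ *: dF i]/(_ * _).
have := Fi0 i; move: (F i x) (dF i) => u du u0.
move: (\prod_(j <- r) F j x) (\sum_(j <- r) dF j / F j x) => p s.
by field.
Qed.

Lemma is_derive_moebius (a b w : K^o) : 1 - b * w != 0 ->
  is_derive w 1 (fun y : K^o => ((y - a) / (1 - b * y) : K^o))
    ((1 - b * a) / (1 - b * w) ^+ 2).
Proof.
move=> nz.
have dnum : is_derive w 1 (fun y : K^o => (y - a : K^o)) 1.
  by apply: is_derive_eq; rewrite subr0.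
have dden : is_derive w 1 (fun y : K^o => (1 - b * y : K^o)) (- b).
  by apply: is_derive_eq; rewrite sub0r -[_ *: 1]/(_ * 1) mulr1.
have dinv := @is_deriveV_nz (fun y : K^o => (1 - b * y : K^o)) w _ nz dden.
apply: is_derive_eq; rewrite -[_ *: (- b)]/(_ * _) -[(w - a) *: _]/((w - a) * _) -[_%:A]/(_ * 1).
by field.
Qed.

Lemma is_derive_poly_quotient (p q : {poly K}) (x : K^o) : q.[x] != 0 ->
  is_derive x 1 (fun y : K^o => p.[y] / q.[y] : K^o)
    ((p^`().[x] * q.[x] - p.[x] * q^`().[x]) / q.[x] ^+ 2).
Proof.
move=> qx0.
have dinv := @is_deriveV_nz (fun y : K^o => q.[y] : K^o) x _ qx0 (is_derive_horner q x).
apply: (is_derive_eq (is_deriveM (is_derive_horner p x) dinv)).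
rewrite -[p.[x] *: _]/(_ * _) -[_ *: p^`().[x]]/(_ * _).
rewrite -[_ *: q^`().[x]]/(_ * _).
by field.
Qed.

End Derivatives.

Section BlaschkeFactor.
Variable R : realType.
Local Notation C := R[i].

Lemma factor_norm_identity (a w : C) :
  `|w - a| ^+ 2 - `|1 - a^* * w| ^+ 2 = (`|w| ^+ 2 - 1) * (1 - `|a| ^+ 2).
Proof. by rewrite !sqr_normc !rmorphB !rmorphM rmorph1 /= conjcK; ring. Qed.

Lemma factor_norm_le (a w : C) : `|a| < 1 -> `|w| <= 1 ->
  `|w - a| <= `|1 - a^* * w|.
Proof.
move=> a_lt1 w_le1; rewrite -(@ler_pXn2r _ 2) ?nnegrE ?normr_ge0 //.
rewrite -subr_le0 factor_norm_identity; apply: mulr_le0_ge0.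
  by rewrite subr_le0 exprn_ile1.
by rewrite subr_ge0 ltW // expr_lt1.
Qed.

Lemma factor_norm_ge (a w : C) : `|a| < 1 -> 1 <= `|w| ->
  `|1 - a^* * w| <= `|w - a|.
Proof.
move=> a_lt1 w_ge1; rewrite -(@ler_pXn2r _ 2) ?nnegrE ?normr_ge0 //.
rewrite -subr_ge0 factor_norm_identity; apply: mulr_ge0.
  by rewrite subr_ge0 exprn_ege1.
by rewrite subr_ge0 ltW // expr_lt1.
Qed.

Lemma factor_denom_neq0 (a w : C) : `|a| < 1 -> `|w| <= 1 -> 1 - a^* * w != 0.
Proof.
move=> a_lt1 w_le1; rewrite subr_eq0; apply/eqP => e.
have : `|a^* * w| < 1.
  by rewrite normrM normcJ; apply: le_lt_trans a_lt1; rewrite ler_piMr.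
by rewrite -e normr1 ltxx.
Qed.

Lemma circle_sub_neq0 (a w : C) : `|a| < 1 -> `|w| = 1 -> w - a != 0.
Proof.
by move=> a_lt1 w1; apply: contraTneq a_lt1 => /eqP; rewrite subr_eq0 => /eqP <-; rewrite w1 ltxx.
Qed.

(* On the circle, w g'(w) / g(w) is the Poisson kernel (1 - |a|^2) / |w - a|^2. *)
Lemma factor_logderiv_circle (a w : C) : `|a| < 1 -> `|w| = 1 ->
  w * ((1 - a^* * a) / (1 - a^* * w) ^+ 2) / ((w - a) / (1 - a^* * w)) =
  (1 - `|a| ^+ 2) / `|w - a| ^+ 2.
Proof.
move=> a_lt1 w1.
have w0 : w != 0 by rewrite -normr_eq0 w1 oner_eq0.
have den0 : 1 - a^* * w != 0 by rewrite factor_denom_neq0 // w1.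
have wa0 := circle_sub_neq0 a_lt1 w1.
have conj_w : w^* = w^-1.
  by apply: (mulfI w0); rewrite mulfV // -sqr_normc w1 expr1n.
rewrite !sqr_normc rmorphB /= conj_w mulrC.
move: den0; rewrite -[Num.conj a]/(a^*%C); move: (a^*%C) => b den0.
by field; rewrite w0 wa0 mulNr den0.
Qed.

End BlaschkeFactor.

Section BlaschkeProduct.
Variables (R : realType) (n : nat) (alpha : R[i]) (a : 'I_n -> R[i]).
Hypothesis alpha_unit : `|alpha| = 1.
Hypothesis a_in_disk : forall k, `|a k| < 1.
Local Notation C := R[i].
Local Notation B := (blaschke alpha a).

Definition poisson_sum (w : C) : C := \sum_(k < n) (1 - `|a k| ^+ 2) / `|w - a k| ^+ 2.

Lemma poisson_sum_ge0 w : 0 <= poisson_sum w.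
Proof.
apply: sumr_ge0 => k _; apply: divr_ge0; last exact: exprn_ge0.
by rewrite subr_ge0 ltW // expr_lt1.
Qed.

Lemma norm_blaschke w : `|B w| = \prod_(k < n) (`|w - a k| / `|1 - (a k)^* * w|).
Proof.
rewrite /blaschke normrM alpha_unit mul1r normr_prod.
by apply: eq_bigr => k _; rewrite normrM normfV.
Qed.

Lemma norm_blaschke_le1 w : `|w| <= 1 -> `|B w| <= 1.
Proof.
move=> w_le1; rewrite norm_blaschke; apply: prodr_ile1 => k _.
have den_gt0 : 0 < `|1 - (a k)^* * w| by rewrite normr_gt0 factor_denom_neq0.
by rewrite divr_ge0 //= ler_pdivrMr // mul1r factor_norm_le.
Qed.

Lemma norm_blaschke_ge1 w : 1 <= `|w| -> (forall k, 1 - (a k)^* * w != 0) ->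
  1 <= `|B w|.
Proof.
move=> w_ge1 den0; rewrite norm_blaschke.
rewrite [leLHS](_ : 1 = \prod_(k < n) (1 : C)); last by rewrite big1.
apply: ler_prod => k _; rewrite ler01 /= ler_pdivlMr ?normr_gt0 // mul1r.
exact: factor_norm_ge.
Qed.

Lemma norm_blaschke_circle w : `|w| = 1 -> `|B w| = 1.
Proof.
move=> w1; apply/eqP; rewrite eq_le norm_blaschke_le1 ?w1 //=.
apply: norm_blaschke_ge1 => [|k]; first by rewrite w1.
by rewrite factor_denom_neq0 ?w1.
Qed.

Lemma is_derive_blaschke_circle w : `|w| = 1 ->
  is_derive (w : C^o) 1 (B : C^o -> C^o) (B w * poisson_sum w / w).
Proof.
move=> w1.
have den0 k : 1 - (a k)^* * w != 0 by rewrite factor_denom_neq0 ?w1.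
have wa0 k : w - a k != 0 := circle_sub_neq0 (a_in_disk k) w1.
have dprod := @is_derive_prod_log _ _ (index_enum 'I_n)
  (fun k (y : C^o) => ((y - a k) / (1 - (a k)^* * y) : C^o))
  (fun k => (1 - (a k)^* * a k) / (1 - (a k)^* * w) ^+ 2) w
  (fun k => is_derive_moebius (a k) (den0 k))
  (fun k => mulf_neq0 (wa0 k) (invr_neq0 (den0 k))).
have -> : (B : C^o -> C^o) = alpha \*: (fun y : C^o =>
    \prod_(k <- index_enum 'I_n) ((y - a k) / (1 - (a k)^* * y) : C^o)) by [].
have w0 : w != 0 by rewrite -normr_eq0 w1 oner_eq0.
apply: is_derive_eq.
have -> : poisson_sum w = w * \sum_(k < n) (1 - (a k)^* * a k) /
    (1 - (a k)^* * w) ^+ 2 / ((w - a k) / (1 - (a k)^* * w)).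
  rewrite mulr_sumr; apply: eq_bigr => k _.
  by rewrite -(factor_logderiv_circle (a_in_disk k) w1) !mulrA.
by rewrite [w * _]mulrC mulrA mulfK // -[_ *: _]/(_ * _) mulrA.
Qed.

Lemma norm_derive1_blaschke_circle w : `|w| = 1 ->
  `|@derive1 C C^o B w| = poisson_sum w.
Proof.
move=> w1; have dB := is_derive_blaschke_circle w1; rewrite derive1E derive_val.
by rewrite normrM normfV w1 invr1 mulr1 normrM norm_blaschke_circle // mul1r ger0_norm // poisson_sum_ge0.
Qed.

Lemma is_derive_mul_blaschke_circle w : `|w| = 1 ->
  is_derive (w : C^o) 1 (fun y : C^o => y * B y : C^o) (B w * (1 + poisson_sum w)).
Proof.
move=> w1; have w0 : w != 0 by rewrite -normr_eq0 w1 oner_eq0.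
have dB := is_derive_blaschke_circle w1.
have -> : (fun y : C^o => y * B y : C^o) = id * (B : C^o -> C^o) by [].
apply: is_derive_eq; rewrite -[w *: _]/(_ * _) -[_ *: 1]/(_ * 1).
by rewrite mulrCA mulfV // !mulr1 mulrDr mulr1 addrC.
Qed.

End BlaschkeProduct.

Section Solutions.
Variables (R : realType) (n : nat) (alpha lambda : R[i]) (a : 'I_n -> R[i]).
Hypothesis alpha_unit : `|alpha| = 1.
Hypothesis a_in_disk : forall k, `|a k| < 1.
Hypothesis lambda_unit : `|lambda| = 1.
Local Notation C := R[i].
Local Notation B := (blaschke alpha a).

Definition numer_poly : {poly C} := alpha *: ('X * \prod_(k < n) ('X - (a k)%:P)).
Definition denom_poly : {poly C} := \prod_(k < n) (1 - ((a k)^*)%:P * 'X).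
Definition solution_poly : {poly C} := numer_poly - lambda *: denom_poly.

Let alpha_neq0 : alpha != 0. Proof. by rewrite -normr_eq0 alpha_unit oner_eq0. Qed.
Let lambda_neq0 : lambda != 0. Proof. by rewrite -normr_eq0 lambda_unit oner_eq0. Qed.

Lemma horner_numer w : numer_poly.[w] = alpha * (w * \prod_(k < n) (w - a k)).
Proof.
rewrite hornerZ hornerM hornerX horner_prod.
by congr (_ * (_ * _)); apply: eq_bigr => k _; rewrite hornerXsubC.
Qed.

Lemma horner_denom w : denom_poly.[w] = \prod_(k < n) (1 - (a k)^* * w).
Proof. by rewrite horner_prod; apply: eq_bigr => k _; rewrite !hornerE. Qed.

Lemma horner_solution w :
  solution_poly.[w] = numer_poly.[w] - lambda * denom_poly.[w].
Proof. by rewrite /solution_poly hornerD hornerN [(lambda *: _).[_]]hornerZ. Qed.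

(* f is the rational function numer_poly / denom_poly (everywhere, with 1/0 = 0). *)
Lemma mul_blaschkeE w : w * B w = numer_poly.[w] / denom_poly.[w].
Proof. by rewrite horner_numer horner_denom /blaschke prodf_div mulrCA !mulrA. Qed.

Lemma numer_root_in_disk w : numer_poly.[w] = 0 -> `|w| < 1.
Proof.
rewrite horner_numer => /eqP; rewrite !mulf_eq0 (negbTE alpha_neq0) /=.
case/orP => [/eqP -> | /prodf_eq0 [k _]]; first by rewrite normr0 ltr01.
by rewrite subr_eq0 => /eqP ->.
Qed.

Lemma denom_neq0_in_disk w : `|w| <= 1 -> denom_poly.[w] != 0.
Proof.
by move=> w_le1; rewrite horner_denom; apply/prodf_neq0 => k _; apply: factor_denom_neq0.
Qed.

Lemma denom_neq0_at_root w : root solution_poly w -> denom_poly.[w] != 0.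
Proof.
rewrite /root horner_solution subr_eq0 => /eqP num_eq.
apply/negP => /eqP den0.
have : `|w| < 1 by apply: numer_root_in_disk; rewrite num_eq den0 mulr0.
by move=> /ltW /denom_neq0_in_disk; rewrite den0 eqxx.
Qed.

Lemma solution_iff_root w : w * B w = lambda <-> root solution_poly w.
Proof.
rewrite mul_blaschkeE /root horner_solution subr_eq0; split => [sol | /eqP num_eq].
  have den0 : denom_poly.[w] != 0.
    by apply: contra_eq_neq sol => ->; rewrite invr0 mulr0 eq_sym.
  by rewrite -sol divfK.
have den0 : denom_poly.[w] != 0.
  by apply: denom_neq0_at_root; rewrite /root horner_solution num_eq subrr.
by rewrite num_eq mulfK.
Qed.

Lemma solution_on_circle w : w * B w = lambda -> `|w| = 1.
Proof.
move=> sol; have norm_sol : `|w| * `|B w| = 1 by rewrite -normrM sol.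
have [w_lt1 | w_gt1 | //] := real_ltgtP (normr_real w) (real1 _).
  have := ler_piMr (normr_ge0 w) (norm_blaschke_le1 alpha_unit a_in_disk (ltW w_lt1)).
  by rewrite norm_sol => /le_lt_trans /(_ w_lt1); rewrite ltxx.
have den0 : denom_poly.[w] != 0.
  by move: sol; rewrite mul_blaschkeE; apply: contra_eq_neq => ->; rewrite invr0 mulr0 eq_sym.
have factor_den0 k : 1 - (a k)^* * w != 0.
  by move: den0; rewrite horner_denom => /prodf_neq0; apply.
have := ler_peMr (normr_ge0 w) (norm_blaschke_ge1 alpha_unit a_in_disk (ltW w_gt1) factor_den0).
by rewrite norm_sol => /(lt_le_trans w_gt1); rewrite ltxx.
Qed.

Lemma size_denom_poly : (size denom_poly <= n.+1)%N.
Proof.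
have size_factor (c : C) : (size (1 - c%:P * 'X)%R <= 2)%N.
  apply: leq_trans (size_add _ _) _; rewrite size_opp geq_max size_poly1 /=.
  by apply: leq_trans (size_mul_leq _ _) _; rewrite size_polyC size_polyX; case: (c != 0).
have := @size_prod_leq C 'I_n xpredT (fun k => 1 - ((a k)^*)%:P * 'X) 1
  (fun k _ => size_factor _).
by rewrite muln1 cardT size_enum_ord.
Qed.

Lemma size_numer_poly : size numer_poly = n.+2.
Proof.
rewrite size_scale // mulrC size_mulX ?monic_neq0 ?monic_prod_XsubC //.
by rewrite size_prod_XsubC /index_enum unlock -enumT size_enum_ord.
Qed.

Lemma size_solution_poly : size solution_poly = n.+2.
Proof.
rewrite size_addl size_numer_poly // size_opp ltnS.
exact: leq_trans (size_scale_leq _ _) size_denom_poly.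
Qed.

Lemma lead_coef_solution_poly : lead_coef solution_poly = alpha.
Proof.
rewrite lead_coefDl; last first.
  by rewrite size_numer_poly size_opp ltnS; exact: leq_trans (size_scale_leq _ _) size_denom_poly.
rewrite lead_coefZ [X in lead_coef X]mulrC lead_coefMX.
by have /monicP -> := monic_prod_XsubC (index_enum 'I_n) xpredT a; rewrite mulr1.
Qed.

Lemma solution_poly_factor :
  exists z : 'I_n.+1 -> C, solution_poly = alpha *: \prod_(j < n.+1) ('X - (z j)%:P).
Proof.
have [rs solE] := closed_field_poly_normal solution_poly.
rewrite lead_coef_solution_poly in solE.
have size_rs : size rs = n.+1.
  by have := size_solution_poly; rewrite solE size_scale // size_prod_XsubC => -[].
by exists (fun j => rs`_j); rewrite {1}solE (big_nth 0) size_rs big_mkord.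
Qed.

(* Step 3: at a root w, P'(w) = Q(w) f'(w) = Q(w) B(w) (1 + T(w)). *)
Lemma deriv_solution_poly_root w : root solution_poly w ->
  solution_poly^`().[w] = denom_poly.[w] * (B w * (1 + poisson_sum a w)).
Proof.
move=> root_w; have den0 := denom_neq0_at_root root_w.
have w1 := solution_on_circle ((solution_iff_root w).2 root_w).
have num_eq : numer_poly.[w] = lambda * denom_poly.[w].
  by apply/eqP; rewrite -subr_eq0 -horner_solution.
have d_circle := is_derive_mul_blaschke_circle alpha a_in_disk w1.
have d_poly : is_derive (w : C^o) 1 (fun y : C^o => y * B y : C^o)
    (solution_poly^`().[w] / denom_poly.[w]).
  have -> : (fun y : C^o => y * B y : C^o) =
      (fun y : C^o => numer_poly.[y] / denom_poly.[y] : C^o).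
    by apply/funext => y; rewrite mul_blaschkeE.
  apply: (is_derive_eq (is_derive_poly_quotient numer_poly den0)).
  rewrite num_eq /solution_poly derivB !derivZ hornerD hornerN !hornerZ.
  by field.
have := @derive_val _ _ _ _ _ _ _ d_poly; rewrite (@derive_val _ _ _ _ _ _ _ d_circle).
by move=> e; rewrite e mulrC divfK.
Qed.

Lemma deriv_solution_poly_neq0 w : root solution_poly w -> solution_poly^`().[w] != 0.
Proof.
move=> root_w; have w1 := solution_on_circle ((solution_iff_root w).2 root_w).
rewrite deriv_solution_poly_root //; apply: mulf_neq0; first exact: denom_neq0_at_root.
apply: mulf_neq0.
  by rewrite -normr_eq0 (norm_blaschke_circle alpha_unit a_in_disk w1) oner_eq0.
by rewrite gt_eqF // (lt_le_trans ltr01) // lerDl poisson_sum_ge0.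
Qed.

Section Factorization.
Variable z : 'I_n.+1 -> C.
Hypothesis solution_poly_factored :
  solution_poly = alpha *: \prod_(j < n.+1) ('X - (z j)%:P).

Lemma root_solution_poly w : root solution_poly w <-> exists j, w = z j.
Proof.
rewrite solution_poly_factored rootZ // /root horner_prod; split.
  by move=> /prodf_eq0 [j _]; rewrite hornerXsubC subr_eq0 => /eqP ->; exists j.
by move=> [j ->]; rewrite (bigD1 j) //= hornerXsubC subrr mul0r.
Qed.

Lemma deriv_solution_poly_node j :
  solution_poly^`().[z j] = alpha * \prod_(i < n.+1 | i != j) (z j - z i).
Proof. by rewrite solution_poly_factored derivZ hornerZ deriv_prod_XsubC_at. Qed.

(* The nodes are distinct, since the roots of P are simple. *)
Lemma factored_injective : injective z.
Proof.
move=> i j zij; apply/eqP; apply: contraT => ij.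
have := deriv_solution_poly_neq0 ((root_solution_poly (z j)).2 (ex_intro _ j erefl)).
by rewrite deriv_solution_poly_node (bigD1 i) //= zij subrr mul0r mulr0 eqxx.
Qed.

(* Step 4: Lagrange interpolation of Q at the nodes, evaluated at 0. *)
Lemma sum_inverse_one_plus_poisson :
  \sum_(j < n.+1) (1 + poisson_sum a (z j))^-1 = 1.
Proof.
pose Pi j := \prod_(i < n.+1 | i != j) (z j - z i).
have denom0 : denom_poly.[0] = 1 by rewrite horner_denom big1 // => k _; rewrite mulr0 subr0.
have root_z j : root solution_poly (z j) by apply/root_solution_poly; exists j.
have sol_z j : z j * B (z j) = lambda by apply/solution_iff_root.
have z_circle j : `|z j| = 1 := solution_on_circle (sol_z j).
have z_neq0 j : z j != 0 by rewrite -normr_eq0 z_circle oner_eq0.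
have B_neq0 j : B (z j) != 0.
  by rewrite -normr_eq0 (norm_blaschke_circle alpha_unit a_in_disk (z_circle j)) oner_eq0.
have Pi_neq0 j : Pi j != 0.
  have := deriv_solution_poly_neq0 (root_z j).
  by rewrite deriv_solution_poly_node mulf_eq0 negb_or => /andP[].
have prod_at0 : alpha * \prod_(i < n.+1) (0 - z i) = - lambda.
  have := horner_solution 0; rewrite solution_poly_factored hornerZ horner_prod.
  rewrite denom0 horner_numer !mul0r mulr0 sub0r mulr1 => <-.
  by congr (_ * _); apply: eq_bigr => i _; rewrite hornerXsubC.
rewrite -[RHS]denom0 (lagrange_interpolation 0 factored_injective size_denom_poly).
apply: eq_bigr => j _.
have eT : 1 + poisson_sum a (z j) = alpha * Pi j / (denom_poly.[z j] * B (z j)).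
  rewrite -deriv_solution_poly_node deriv_solution_poly_root // mulrA.
  by rewrite [_ * (1 + _)]mulrC mulfK // mulf_neq0 ?denom_neq0_at_root.
have eB : B (z j) = lambda / z j by rewrite -(sol_z j) mulrC mulKf.
have eP : \prod_(i < n.+1 | i != j) (0 - z i) = lambda / (alpha * z j).
  move: prod_at0; rewrite (bigD1 j) //= sub0r mulrCA mulNr => /oppr_inj <-.
  by rewrite mulrA [z j * alpha]mulrC [alpha * z j * _]mulrC mulfK ?mulf_neq0.
rewrite eT eP eB -/(Pi j).
by field; rewrite Pi_neq0 z_neq0 alpha_neq0 lambda_neq0 denom_neq0_at_root.
Qed.

End Factorization.

End Solutions.

Theorem mainTheorem6 (R : realType) (n : nat) (alpha : R[i]) (a : 'I_n -> R[i])
  (lambda : R[i]) :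
  (0 < n)%N ->
  `|alpha| = 1 ->
  (forall k, `|a k| < 1) ->
  `|lambda| = 1 ->
  exists z : 'I_n.+1 -> R[i],
    [/\ injective z,
        (forall w : R[i], w * blaschke alpha a w = lambda <-> exists j, w = z j),
        (forall j, `|z j| = 1) &
        \sum_(j < n.+1) (`|@derive1 R[i] R[i]^o (blaschke alpha a) (z j)| + 1)^-1 = 1].
Proof.
move=> _ alpha_unit a_in_disk lambda_unit.
have [z factored] := solution_poly_factor lambda a alpha_unit.
have solutions w : w * blaschke alpha a w = lambda <-> exists j, w = z j.
  rewrite (solution_iff_root alpha_unit a_in_disk lambda_unit).
  exact: (root_solution_poly alpha_unit factored w).
have on_circle j : `|z j| = 1.
  by apply: (solution_on_circle alpha_unit a_in_disk lambda_unit); apply/solutions; exists j.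
exists z; split => //; first exact: (factored_injective alpha_unit a_in_disk lambda_unit factored).
under eq_bigr => j _ do rewrite (norm_derive1_blaschke_circle alpha_unit a_in_disk (on_circle j)) addrC.
exact: (sum_inverse_one_plus_poisson alpha_unit a_in_disk lambda_unit factored).
Qed.
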